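(* Let $X$ be a regular topological space, let $\mathcal A(X)$ be a maximal strongly disjoint family of nonempty, regular open, $\varrho$-homogeneous subsets of $X$, and for $H\in\mathrm{RO}(X)$ let $\mathrm{tr}_X(H)=\{A\in\mathcal A(X): A\cap H\neq\emptyset\}$. Then for each $H\in\mathrm{RO}(X)$: (1) $\rho(H)=\prod\{\rho(A): A\in\mathrm{tr}_X(H)\}$; (2) $\rho(H)\ge 2^{|\mathrm{tr}_X(H)|}$; (3) $|\{B\in\mathrm{RO}(X): \mathrm{tr}_X(B)\subseteq\mathrm{tr}_X(H)\}|\le\rho(H)$.
   Context: $\mathrm{RO}(G)$ denotes the family of regular open subsets of an open set $G$ and $\rho(G)=|\mathrm{RO}(G)|$. An open set $A$ (as a subspace) is $\varrho$-homogeneous if $\rho(B)=\rho(A)$ for every nonempty regular open $B$ of $A$. A family $\mathcal E$ of subsets of $X$ is strongly disjoint if $\overline{E_0}\cap\overline{E_1}=\emptyset$ for all distinct $E_0,E_1\in\mathcal E$. *)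

From HB Require Import structures.
From mathcomp Require Import all_boot all_order all_algebra.
From mathcomp Require Import all_classical all_reals all_analysis.

Set Implicit Arguments.
Unset Strict Implicit.
Unset Printing Implicit Defensive.

Local Open Scope classical_set_scope.

Section Defs.
Context {X : topologicalType}.

Definition rel_closure (G B : set X) : set X := G `&` closure B.

Definition rel_interior (G S : set X) : set X :=
  [set x | G x /\ exists U : set X, [/\ open U, U x & U `&` G `<=` S]].

Definition RO (G : set X) : set (set X) :=
  [set B | B `<=` G /\ B = rel_interior G (rel_closure G B)].

(* A is rho-homogeneous: rho(B) = rho(A) for all nonempty B in RO(A) *)
Definition rho_homogeneous (A : set X) : Prop :=
  forall B, RO A B -> B !=set0 -> (RO B #= RO A)%card.

Definition strongly_disjoint (E : set (set X)) : Prop :=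
  forall E0 E1, E E0 -> E E1 -> E0 <> E1 -> closure E0 `&` closure E1 = set0.

Definition admissible_family (F : set (set X)) : Prop :=
  strongly_disjoint F /\
  (forall A, F A -> [/\ A !=set0, RO setT A & rho_homogeneous A]).

Definition maximal_admissible_family (F : set (set X)) : Prop :=
  admissible_family F /\
  (forall F', admissible_family F' -> F `<=` F' -> F' = F).

Definition tr (F : set (set X)) (H : set X) : set (set X) :=
  [set A | F A /\ A `&` H !=set0].

(* the cartesian product prod_{A in T} RO(A), encoded as functions that
   pick an element of RO(A) for A in T and are set0 outside T *)
Definition prod_RO (T : set (set X)) : set (set X -> set X) :=
  [set f | forall A, (T A -> RO A (f A)) /\ (~ T A -> f A = set0)].

End Defs.

From HB Require Import structures.
From mathcomp Require Import all_boot all_order all_algebra.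
From mathcomp Require Import all_classical all_reals all_analysis.

(** The union of a maximal family [AX] is dense. Otherwise, by regularity, an
    open set missing the union contains the closure of a nonempty regular open
    set [W0]; among the nonempty regular open subsets of [W0], one with [RO] of
    least cardinality is rho-homogeneous and could be added to [AX]. Since the
    members of [AX] are disjoint open sets with dense union, a regular open set
    is determined by its traces on them, and [B |-> (B `&` A)_(A in tr H)] is a
    bijection from [RO H] onto the product of the [RO (H `&` A)]; homogeneity
    gives [RO (H `&` A) #= RO A]. For (2) and (3), [S |-> (A if A in S)_A] and
    [B |-> (B `&` A)_A] inject into the same product. *)

Local Open Scope classical_set_scope.
Local Open Scope card_scope.

Section RegularOpen.
Context {X : topologicalType}.
Implicit Types A B C D G : set X.

Lemma open_subset_interior_closure B : open B -> B `<=` (closure B)°.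
Proof. by move=> oB; rewrite -open_subsetE //; exact: subset_closure. Qed.

Lemma closure_closure A : closure (closure A) = closure A.
Proof. exact/esym/closure_id/closed_closure. Qed.

Lemma open_setI_closure {A} B :
  open A -> A `&` closure B `<=` closure (A `&` B).
Proof.
move=> oA x [Ax clBx] N Nx.
have [y [By [Ay Ny]]] : B `&` (A `&` N) !=set0.
  by apply: clBx; apply: filterI => //; exact: open_nbhs_nbhs.
by exists y.
Qed.

Lemma closure_setI_dense B D :
  open B -> dense D -> closure (B `&` D) = closure B.
Proof.
move=> oB dD; apply/seteqP; split; first by apply: closureS; exact: subIsetl.
move=> x clBx N /nbhs_interior Nx.
have [y [By Ny]] := clBx _ Nx.
have [z [[Bz Nz] Dz]] : (B `&` N°) `&` D !=set0.
  by apply: dD; [exists y | exact: openI (open_interior _)].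
by exists z; split; [split | exact: interior_subset].
Qed.

Lemma ROE G B : open G -> RO G B <-> B = G `&` (closure B)°.
Proof.
move=> oG.
have E : rel_interior G (rel_closure G B) = G `&` (closure B)°.
  apply/seteqP; split => x.
    move=> [Gx [V [oV Vx VG]]]; split => //.
    rewrite /interior nbhsE; exists (V `&` G).
      by split => //; exact: openI.
    by move=> y /VG [].
  move=> [Gx]; rewrite /interior nbhsE => -[V [oV Vx] Vcl].
  by split => //; exists V; split => // y [Vy Gy]; split => //; exact: Vcl.
rewrite /RO /= E; split=> [[]//|BE]; split => //.
by rewrite BE; exact: subIsetl.
Qed.

Lemma RO_sub {G B} : RO G B -> B `<=` G.
Proof. by case. Qed.

Lemma RO_open {G B} : open G -> RO G B -> open B.
Proof.
by move=> oG /(ROE _ _ oG) ->; apply: openI => //; exact: open_interior.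
Qed.

Lemma RO_setT_closure_inj B C : RO setT B -> RO setT C ->
  closure B = closure C -> B = C.
Proof.
by move=> /(ROE _ _ openT) eB /(ROE _ _ openT) eC clBC; rewrite eB eC clBC.
Qed.

Lemma RO_interior_closure G B : open G -> RO G (G `&` (closure B)°).
Proof.
move=> oG; apply/ROE => //; apply/seteqP; split.
  move=> x [Gx iBx]; split => //; apply: open_subset_interior_closure => //.
  by apply: openI => //; exact: open_interior.
move=> x [Gx]; move/(interiorS (closureS (@subIsetr _ G (closure B)°))).
by have /= -> := interior_closure_idem B.
Qed.

Lemma RO_self G : open G -> RO G G.
Proof.
move=> oG; apply/ROE => //; apply/seteqP; split=> [x Gx|x []//].
by split => //; exact: open_subset_interior_closure.
Qed.

Lemma RO_set0 G : open G -> RO G set0.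
Proof. by move=> oG; apply/ROE => //; rewrite closure0 interior0 setI0. Qed.

Lemma RO_trans {G B C} : open G -> RO G B -> RO B C -> RO G C.
Proof.
move=> oG GB BC; have oB := RO_open oG GB.
move/(ROE _ _ oB): BC => CE; move/(ROE _ _ oG): GB => BE.
have CB : C `<=` B by rewrite CE; exact: subIsetl.
apply/ROE => //; apply/seteqP; split => x.
  move=> Cx; split; last by move: Cx; rewrite {1}CE => -[].
  by have := CB _ Cx; rewrite BE => -[].
move=> [Gx iCx]; rewrite CE; split => //.
by rewrite BE; split => //; exact: interiorS (closureS CB) _ iCx.
Qed.

Lemma RO_setI {G A B} : open G -> open A -> RO G B -> RO (G `&` A) (B `&` A).
Proof.
move=> oG oA GB; move/(ROE _ _ oG): (GB) => BE.
apply/ROE; first exact: openI.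
apply/seteqP; split => x.
  move=> [Bx Ax]; split; first by split => //; exact: RO_sub GB _ Bx.
  apply: open_subset_interior_closure => //.
  by apply: openI => //; exact: RO_open GB.
move=> [[Gx Ax] iBAx]; split => //; rewrite BE; split => //.
exact: interiorS (closureS (@subIsetl _ B A)) _ iBAx.
Qed.

Lemma closure_bigcup_disjoint (T : set (set X)) (f : set X -> set X) A :
  open A -> (forall A', T A' -> f A' `<=` A') ->
  (forall A', T A' -> A' <> A -> A `&` A' = set0) ->
  A `&` closure (\bigcup_(A' in T) f A') `<=` closure (f A).
Proof.
move=> oA fsub disj x /(open_setI_closure _ oA); apply: closureS.
move=> y [Ay [A' TA' fy]]; have [<-//|neq] := pselect (A' = A).
have : (A `&` A') y by split => //; exact: fsub.
by rewrite (disj _ TA' neq).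
Qed.

End RegularOpen.

Section CardinalMinimum.
Variables (I : Type) (T : pointedType) (P : set I) (S : I -> set T).

(* A maximal family of selectors that differ at every index exhausts some
   [S i], which then injects into every [S j] by evaluation at [j]. *)
Definition separating_selectors (F : set (I -> T)) :=
  (forall t, F t -> forall i, P i -> S i (t i)) /\
  (forall t t', F t -> F t' -> t <> t' -> forall i, P i -> t i <> t' i).

Lemma exists_maximal_separating_selectors : exists F,
  separating_selectors F /\ forall F', F `<` F' -> ~ separating_selectors F'.
Proof.
apply: Zorn_bigcup => Fs FsS Fstot; split.
  by move=> t [F FsF Ft]; exact: (FsS _ FsF).1.
move=> t t' [F FsF Ft] [F' FsF' Ft'].
have [FF'|F'F] := Fstot _ _ FsF FsF'.
  by apply: (FsS _ FsF').2 => //; exact: FF'.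
by apply: (FsS _ FsF).2 => //; exact: F'F.
Qed.

Lemma maximal_separating_selectors_cover {F} :
  P !=set0 -> separating_selectors F ->
  (forall F', F `<` F' -> ~ separating_selectors F') ->
  exists2 i, P i & S i `<=` (fun t => t i) @` F.
Proof.
move=> [i0 Pi0] [FS Fsep] Fmax; apply: contrapT => nocover.
have miss i : exists s, P i -> S i s /\ ~ ((fun t => t i) @` F) s.
  have [Pi|nPi] := pselect (P i); last by exists point.
  have /existsNP[s /not_implyP[Ss nFs]] : ~ S i `<=` (fun t => t i) @` F.
    by move=> cover; apply: nocover; exists i.
  by exists s.
have [t0 t0miss] := choice miss.
apply: (Fmax (F `|` [set t0])).
  split; first exact: subsetUl.
  move=> /(_ t0 (or_intror erefl)) Ft0.
  by have [_] := t0miss _ Pi0; apply; exists t0.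
split.
  by move=> t [Ft|->] i Pi; [exact: FS|have [] := t0miss i Pi].
move=> t t' [Ft|->] [Ft'|->] tt' i Pi.
- exact: Fsep.
- by move=> e; have [_] := t0miss i Pi; apply; exists t.
- by move=> e; have [_] := t0miss i Pi; apply; exists t'.
- by [].
Qed.

Lemma card_le_minimum :
  P !=set0 -> exists2 i, P i & forall j, P j -> S i #<= S j.
Proof.
move=> Pn; have [F [Fsel Fmax]] := exists_maximal_separating_selectors.
have [i Pi cover] := maximal_separating_selectors_cover Pn Fsel Fmax.
have pick s : exists t, S i s -> F t /\ t i = s.
  have [Ss|nSs] := pselect (S i s); last by exists point.
  by have [t Ft <-] := cover _ Ss; exists t.
have [h hP] := choice pick.
exists i => // j Pj; apply/pcard_leP/injfunPex; exists (fun s => h s j).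
  by move=> s /hP[Fh _]; exact: Fsel.1.
move=> s s' /set_mem/hP[Fh si] /set_mem/hP[Fh' s'i] /= hj.
have [e|neq] := pselect (h s = h s'); first by rewrite -si -s'i e.
by have := Fsel.2 _ _ Fh Fh' neq j Pj.
Qed.

End CardinalMinimum.

(* [prod_RO T] is [restricted_prod set0 T RO]. *)
Definition restricted_prod {I U : Type} (d : U) (T : set I) (S : I -> set U) :
    set (I -> U) :=
  [set f | forall i, (T i -> S i (f i)) /\ (~ T i -> f i = d)].

Lemma restricted_prod_patch {I U : Type} (d : U) T (S : I -> set U) F :
  (forall i, T i -> S i (F i)) -> restricted_prod d T S (patch (fun=> d) T F).
Proof.
move=> SF i; rewrite /patch; case: ifPn => [/set_mem Ti|/negP nTi].
  by split=> [_|/(_ Ti)[]]; exact: SF.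
by split=> // /mem_set.
Qed.

Lemma card_eq_restricted_prod {I : Type} {U V : pointedType} (d : U) (d' : V) T
    (S : I -> set U) (S' : I -> set V) :
  (forall i, T i -> S i #= S' i) ->
  restricted_prod d T S #= restricted_prod d' T S'.
Proof.
move=> SS'.
have bij i : exists g, T i -> set_bij (S i) (S' i) g.
  have [Ti|nTi] := pselect (T i); last by exists (fun=> d').
  by have /card_set_bijP[g gbij] := SS' i Ti; exists g.
have [g gP] := choice bij.
apply/card_set_bijP; exists (fun f => patch (fun=> d') T (fun i => g i (f i))).
split.
- move=> f fS; apply: restricted_prod_patch => i Ti.
  by have [gfun _ _] := gP i Ti; exact/gfun/(fS i).1.
- move=> f f' /set_mem fS /set_mem f'S /= e; apply/funext => i.
  have [Ti|nTi] := pselect (T i); last by rewrite (fS i).2 // (f'S i).2.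
  have [_ ginj _] := gP i Ti.
  apply: ginj; rewrite ?inE; [exact: (fS i).1|exact: (f'S i).1|].
  by move/(congr1 (fun f => f i)): e; rewrite /patch (mem_set Ti).
- move=> f' f'S.
  have pre i : exists u, T i -> S i u /\ g i u = f' i.
    have [Ti|nTi] := pselect (T i); last by exists d.
    by have [_ _ /(_ _ ((f'S i).1 Ti))[u]] := gP i Ti; exists u.
  have [k kP] := choice pre.
  exists (patch (fun=> d) T k).
    by apply: restricted_prod_patch => i /kP[].
  apply/funext => i; rewrite /patch; case: ifPn => [/set_mem Ti|/negP nTi].
    by rewrite (mem_set Ti); exact: (kP i Ti).2.
  by rewrite (f'S i).2 //; move/mem_set.
Qed.

Section RegularOpenSubsets.
Context {X : topologicalType}.

Lemma RO_setT_open {B : set X} : RO setT B -> open B.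
Proof. exact: RO_open openT. Qed.

Lemma exists_rho_homogeneous {W0 : set X} : RO setT W0 -> W0 !=set0 ->
  exists A, [/\ A !=set0, RO setT A, rho_homogeneous A & A `<=` W0].
Proof.
move=> W0RO W0n.
pose P := [set W : set X | [/\ RO setT W, W !=set0 & W `<=` W0]].
have PW0 : P W0 by split.
have [W [WRO Wn WW0] Wmin] := @card_le_minimum _ _ P RO (ex_intro _ _ PW0).
exists W; split => // B WB Bn; rewrite card_eq_le; apply/andP; split.
  by apply: subset_card_le => C; exact: RO_trans (RO_setT_open WRO) WB.
apply: Wmin; split => //; first exact: RO_trans openT WRO WB.
by move=> x /(RO_sub WB) /WW0.
Qed.

Lemma regular_RO_closure_subset {O : set X} {x : X} : regular_space X ->
  open O -> O x -> exists W, [/\ RO setT W, W x & closure W `<=` O].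
Proof.
move=> reg oO Ox.
have [V Vx clVO] := reg x O (open_nbhs_nbhs (conj oO Ox)).
exists ((closure V°)°); split.
- by have := RO_interior_closure setT (V°) openT; rewrite setTI.
- exact: open_subset_interior_closure (@open_interior _ V) _ Vx.
- move=> y /(closureS (@interior_subset _ (closure V°))).
  rewrite closure_closure => /(closureS (@interior_subset _ V)).
  exact: clVO.
Qed.

End RegularOpenSubsets.

Section AdmissibleFamily.
Context {X : topologicalType} {AX : set (set X)}.
Hypothesis admAX : admissible_family AX.

Lemma admissible_open {A} : AX A -> open A.
Proof. by move=> /admAX.2[_ /RO_setT_open]. Qed.

Lemma admissible_disjoint {A A'} : AX A -> AX A' -> A <> A' -> A `&` A' = set0.
Proof.
move=> AXA AXA' neq; rewrite -subset0 => x [Ax A'x].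
by rewrite -(admAX.1 _ _ AXA AXA' neq); split; exact: subset_closure.
Qed.

Lemma admissible_setU1 {A} : A !=set0 -> RO setT A -> rho_homogeneous A ->
  (forall A', AX A' -> closure A `&` closure A' = set0) ->
  admissible_family (A |` AX).
Proof.
move=> An ARO Ahom Asep; split; last by move=> B [->|/admAX.2].
move=> E0 E1 [->|H0] [->|H1] neq //.
- exact: Asep.
- by rewrite setIC; exact: Asep.
- exact: admAX.1.
Qed.

End AdmissibleFamily.

Lemma maximal_admissible_dense {X : topologicalType} {AX : set (set X)} :
  regular_space X -> maximal_admissible_family AX ->
  dense (\bigcup_(A in AX) A).
Proof.
move=> reg [adm maxAX] O [x Ox] oO; apply: contrapT => missO.
have missD y : O y -> ~ (\bigcup_(A in AX) A) y.
  by move=> Oy Dy; apply: missO; exists y.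
have [W [WRO Wx clWO]] := regular_RO_closure_subset reg oO Ox.
have [A [An ARO Ahom AW]] := exists_rho_homogeneous WRO (ex_intro _ x Wx).
have clAO : closure A `<=` O by move=> y /(closureS AW) /clWO.
have Asep A' : AX A' -> closure A `&` closure A' = set0.
  move=> AXA'; rewrite -subset0 => y [/clAO Oy clA'y].
  have [z [A'z Oz]] : A' `&` O !=set0 by apply: clA'y; exact: open_nbhs_nbhs.
  by apply: (missD z) => //; exists A'.
have AXA : AX A.
  have admAX' := admissible_setU1 adm An ARO Ahom Asep.
  by rewrite -(maxAX _ admAX' (@subsetUr _ _ _)); left.
have [a Aa] := An.
by apply: (missD a); [exact/clAO/subset_closure | exists A].
Qed.

Definition traces {X : Type} (T : set (set X)) (B : set X) : set X -> set X :=
  patch (fun=> set0) T (fun A => B `&` A).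

Section Traces.
Context {X : topologicalType} {AX : set (set X)}.
Hypotheses (admAX : admissible_family AX)
  (denseAX : dense (\bigcup_(A in AX) A)).

Lemma trS (B C : set X) : B `<=` C -> tr AX B `<=` tr AX C.
Proof.
by move=> BC A [AXA [x [Ax Bx]]]; split => //; exists x; split => //; exact: BC.
Qed.

Lemma traces_RO {G T B} : T `<=` AX -> open G -> RO G B ->
  restricted_prod set0 T (fun A => RO (G `&` A)) (traces T B).
Proof.
move=> TAX oG GB; apply: restricted_prod_patch => A TA.
exact: RO_setI oG (admissible_open admAX (TAX _ TA)) GB.
Qed.

Lemma traces_inj {T B C} : RO setT B -> RO setT C ->
  tr AX B `<=` T -> tr AX C `<=` T -> traces T B = traces T C -> B = C.
Proof.
have sub B' C' : tr AX B' `<=` T -> traces T B' = traces T C' ->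
    B' `&` \bigcup_(A in AX) A `<=` C'.
  move=> trB e x [Bx [A AXA Ax]].
  have TA : T A by apply: trB; split => //; exists x.
  have : traces T B' A x by rewrite /traces /patch (mem_set TA).
  by rewrite e /traces /patch (mem_set TA) => -[].
move=> BRO CRO trB trC e; apply: RO_setT_closure_inj => //.
rewrite -(closure_setI_dense _ _ (RO_setT_open BRO) denseAX).
rewrite -(closure_setI_dense _ _ (RO_setT_open CRO) denseAX).
congr closure; apply/seteqP; split => x [yx Dx]; split => //.
  exact: sub _ _ trB e x (conj yx Dx).
exact: sub _ _ trC (esym e) x (conj yx Dx).
Qed.

Lemma traces_surj {G T f} : T `<=` AX -> open G ->
  restricted_prod set0 T (fun A => RO (G `&` A)) f ->
  exists2 B, RO G B & traces T B = f.
Proof.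
move=> TAX oG fT; set U := \bigcup_(A in T) f A.
exists (G `&` (closure U)°); first exact: RO_interior_closure.
apply/funext => A; rewrite /traces /patch.
case: ifPn => [/set_mem TA|/negP nTA]; last first.
  by rewrite (fT A).2 //; move/mem_set.
have oA := admissible_open admAX (TAX _ TA).
move/(ROE _ _ (openI oG oA)): ((fT A).1 TA) => fAE.
have clU : A `&` closure U `<=` closure (f A).
  apply: closure_bigcup_disjoint => // [A' /(fT A').1 /RO_sub fA' x /fA' []//|].
  move=> A' TA' neq.
  by apply: (admissible_disjoint admAX (TAX _ TA) (TAX _ TA')); exact: nesym.
apply/seteqP; split => x.
  move=> [[Gx iUx] Ax]; rewrite fAE; split => //.
  have : A `&` (closure U)° `<=` (closure (f A))°.
    rewrite -open_subsetE; last exact: openI oA (open_interior _).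
    by move=> y [Ay /interior_subset iy]; exact: clU.
  by apply; split.
move=> fx; have [[Gx Ax] ifx] : ((G `&` A) `&` (closure (f A))°) x.
  by rewrite -fAE.
split => //; split => //.
by apply: interiorS (closureS _) _ ifx => y fy; exists A.
Qed.

Lemma card_RO_traces {H} : RO setT H ->
  RO H #= restricted_prod set0 (tr AX H) (fun A => RO (H `&` A)).
Proof.
move=> HRO; have oH := RO_setT_open HRO.
have trAX : tr AX H `<=` AX by move=> A [].
apply/card_set_bijP; exists (traces (tr AX H)); split.
- by move=> B HB; exact: traces_RO.
- move=> B C /set_mem HB /set_mem HC; apply: traces_inj.
  + exact: RO_trans openT HRO HB.
  + exact: RO_trans openT HRO HC.
  + exact/trS/RO_sub/HB.
  + exact/trS/RO_sub/HC.
- by move=> f /(traces_surj trAX oH)[B HB <-]; exists B.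
Qed.

Lemma card_RO_setI_tr {H A} : RO setT H -> tr AX H A -> RO (H `&` A) #= RO A.
Proof.
move=> HRO [AXA AHn]; have [_ _ Ahom] := admAX.2 A AXA.
apply: Ahom; last by rewrite setIC.
by have := RO_setI openT (admissible_open admAX AXA) HRO; rewrite setTI.
Qed.

Lemma card_powerset_tr_le H : [set S | S `<=` tr AX H] #<= prod_RO (tr AX H).
Proof.
have sub S S' : S `<=` tr AX H ->
    patch (fun=> set0) S id = patch (fun=> set0) S' id -> S `<=` S'.
  move=> StrH e A SA; have [_ [x [Ax _]]] := StrH _ SA.
  have : patch (fun=> set0) S' id A x by rewrite -e /patch (mem_set SA).
  by rewrite /patch; case: ifPn => [/set_mem //|_ []].
apply/pcard_leP/injfunPex; exists (fun S => patch (fun=> set0) S id).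
  move=> S /= StrH A; rewrite /patch.
  case: ifPn => [/set_mem SA|/negP nSA]; split => // trA.
  - exact/RO_self/(admissible_open admAX)/trA.1.
  - by case: trA; exact: StrH.
  - exact/RO_set0/(admissible_open admAX)/trA.1.
move=> S S' /set_mem StrH /set_mem S'trH e; apply/seteqP; split.
  exact: sub _ _ StrH e.
exact: sub _ _ S'trH (esym e).
Qed.

Lemma card_tr_subset_le H :
  [set B | RO setT B /\ tr AX B `<=` tr AX H] #<= prod_RO (tr AX H).
Proof.
apply/pcard_leP/injfunPex; exists (traces (tr AX H)).
  move=> B [BRO _]; apply: (@restricted_prod_patch _ _ set0 _ RO) => A [AXA _].
  by have := RO_setI openT (admissible_open admAX AXA) BRO; rewrite setTI.
by move=> B C /set_mem[BRO trB] /set_mem[CRO trC]; exact: traces_inj.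
Qed.

End Traces.

Theorem lemma5 (X : topologicalType) (AX : set (set X)) :
  regular_space X ->
  maximal_admissible_family AX ->
  forall H : set X, RO setT H ->
    [/\ (RO H #= prod_RO (tr AX H))%card,
        ([set S : set (set X) | S `<=` tr AX H] #<= RO H)%card
      & ([set B | RO setT B /\ tr AX B `<=` tr AX H] #<= RO H)%card].
Proof.
move=> reg maxAX H HRO.
have adm := maxAX.1; have denseAX := maximal_admissible_dense reg maxAX.
have prodE : RO H #= prod_RO (tr AX H).
  apply: card_eq_trans (card_RO_traces adm denseAX HRO) _.
  by apply: card_eq_restricted_prod => A /(card_RO_setI_tr adm HRO).
have prod_le : prod_RO (tr AX H) #<= RO H.
  by move: (card_esym prodE); rewrite card_eq_le => /andP[].
split => //; apply: (card_le_trans _ prod_le).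
- exact: (card_powerset_tr_le adm H).
- exact: (card_tr_subset_le adm denseAX H).
Qed.
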